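(* Let $G$ be a finite group of order $n\geq 2$. The number of subsets $S\subseteq G$ such that $\varphi(S)=S$ for some automorphism $\varphi\in\mathrm{Aut}(G)\setminus\{1\}$ is at most $2^{3n/4+(\log_2 n)^2}$. *)

From HB Require Import structures.
From mathcomp Require Import all_boot all_fingroup.
From Stdlib Require Import Reals.

Set Implicit Arguments.
Unset Strict Implicit.
Unset Printing Implicit Defensive.

Definition aut_fixed_subsets (gT : finGroupType) : {set {set gT}} :=
  [set S : {set gT} |
     [exists phi in Aut [set: gT], (phi != 1%g) && (phi @: S == S)]].

Definition log2R (x : R) : R := (ln x / ln 2)%R.

From HB Require Import structures.
From mathcomp Require Import all_boot all_fingroup.
From Stdlib Require Import Reals Lra.
From mathcomp Require Import zify.
(* Re-import ssrnat after Reals so that [^] on nat denotes [expn], not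
   [Nat.pow]. *)
Import ssrnat.

Set Implicit Arguments.
Unset Strict Implicit.
Unset Printing Implicit Defensive.

(* Let G be a finite group of order n >= 2.  A subset S fixed by some
   non-identity automorphism phi is phi-invariant, so the number of such S is
   at most |Aut G| times the maximal number of phi-invariant subsets.

   - Invariant subsets of a permutation are unions of its cycles, so there
     are at most 2^(#cycles) of them (card_perm_invariant_sets).
   - The fixed points of phi <> 1 form a proper subgroup, hence at most n/2
     points are fixed; every other point lies in a cycle of length >= 2, so
     phi has at most 3n/4 cycles (aut_fixed_index,
     card_orbit_roots_half_fixed).
   - G has a generating sequence of length k with 2^k <= n, since each new
     generator at least doubles the generated subgroup; an automorphism is
     determined by the images of the generators, so |Aut G| <= n^k
     (small_generating_seq, card_Aut_gen).
   Altogether the count is at most n^k * 2^(3n/4) with k <= log2 n, which is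
   bounded by 2^(3n/4 + (log2 n)^2) in the reals. *)

Section OrbitRoots.
Variables (T : finType) (a : {perm T}).

(* Cycles of [a] are represented by their roots [froot a x]. *)
Local Notation roots := [set x | froot a x == x].
Local Notation fixed := [set x | a x == x].

Lemma froot_perm x : froot a (a x) = froot a x.
Proof.
apply/eqP; rewrite root_connect; last exact/fconnect_sym/perm_inj.
by rewrite (fconnect_sym (@perm_inj _ a)) fconnect1.
Qed.

(* An [a]-invariant set is a union of cycles, hence determined by the roots
   it contains. *)
Lemma card_perm_invariant_sets :
  #|[set S : {set T} | a @: S == S]| <= 2 ^ #|roots|.
Proof.
have memE (S : {set T}) : a @: S = S -> forall x, (x \in S) = (froot a x \in S :&: roots).
  move=> aS x; have closedS : closed (frel a) (mem S).
    move=> u v /eqP <-; rewrite -{2}aS mem_imset //; exact: perm_inj.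
  rewrite !inE (closed_connect closedS (connect_root _ x)).
  by rewrite (root_root (fconnect_sym (@perm_inj _ a))) (eqxx (froot a x)) andbT.
rewrite -card_powerset -(card_in_imset (f := fun S => S :&: roots)).
  apply: subset_leq_card; apply/subsetP => _ /imsetP [S _ ->].
  by rewrite powersetE subsetIr.
move=> S S'; rewrite !inE => /eqP aS /eqP aS' eqS; apply/setP => x.
by rewrite (memE _ aS) (memE _ aS') eqS.
Qed.

(* The map [a] sends the moved orbit representatives injectively to moved
   points that are not representatives, so at most half of the moved points
   are representatives; fixed points are their own representatives. *)
Lemma card_orbit_roots : 2 * #|roots| <= #|T| + #|fixed|.
Proof.
pose moved := ~: fixed.
have moved_roots : #|moved :&: roots| <= #|moved :\: roots|.
  rewrite -(card_in_imset (f := a) (D := mem (moved :&: roots))); last first.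
    by move=> x y _ _; apply: perm_inj.
  apply: subset_leq_card; apply/subsetP => _ /imsetP [x + ->].
  rewrite !inE froot_perm => /andP [ax_x /eqP ->].
  by rewrite (eq_sym x) ax_x /=; apply: contra ax_x => /eqP/perm_inj->.
have split_roots := cardsID fixed roots; have split_moved := cardsID roots moved.
have split_T := cardsC fixed; have fixed_roots := subset_leq_card (subsetIl fixed roots).
rewrite [roots :&: fixed]setIC setDE [roots :&: _]setIC in split_roots.
rewrite {}/moved in moved_roots split_roots split_moved split_T; lia.
Qed.

Lemma card_orbit_roots_half_fixed :
  2 * #|fixed| <= #|T| -> 4 * #|roots| <= 3 * #|T|.
Proof. by have := card_orbit_roots; lia. Qed.

End OrbitRoots.

Section AutomorphismCounting.
Variable gT : finGroupType.
Implicit Types (G H K : {group gT}) (a b : {perm gT}).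

Lemma proper_card_double H K : H \proper K -> 2 * #|H| <= #|K|.
Proof.
case/andP=> sHK not_sKH; rewrite -(Lagrange sHK) mulnC leq_mul2l.
by rewrite indexg_gt1 not_sKH orbT.
Qed.

(* Every group G is generated by a sequence of length at most log2 |G|:
   adjoin elements outside the generated subgroup, doubling its order at each
   step, until the whole of G is reached. *)
Lemma small_generating_seq G :
  exists2 s : seq gT, <<[set x in s]>>%g = G & 2 ^ size s <= #|G|.
Proof.
suff grow s : [set x in s] \subset G -> 2 ^ size s <= #|<<[set x in s]>>%g| ->
    exists2 t : seq gT, <<[set x in t]>>%g = G & 2 ^ size t <= #|G|.
  apply: (grow [::]); first by apply/subsetP => x; rewrite inE.
  by rewrite (_ : [set x in [::]] = set0) ?gen0 ?cards1 //; apply/setP => x; rewrite !inE.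
have [m] := ubnP (#|G| - #|<<[set x in s]>>%g|); elim: m s => // m IH s.
set H := <<[set y in s]>>%G => lt_m sG le_s; have sHG : H \subset G by rewrite gen_subG.
have [eqHG | neHG] := eqVneq (H : {set gT}) G; first by exists s; rewrite -?eqHG.
have [x Gx notHx] : exists2 x, x \in G & x \notin H.
  by apply/subsetPn; rewrite eqEsubset sHG /= in neHG.
set K := <<[set y in x :: s]>>%G.
have sHK : H \subset K by apply: genS; apply/subsetP => y; rewrite !inE orbC => ->.
have pHK : H \proper K.
  rewrite properEneq sHK andbT; apply: contraNneq notHx => ->.
  by rewrite mem_gen // !inE eqxx.
have sxsG : [set y in x :: s] \subset G.
  apply/subsetP => y; rewrite !inE => /orP [/eqP -> // | sy].
  by apply: (subsetP sG); rewrite inE.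
have sKG : K \subset G by rewrite gen_subG.
apply: (IH (x :: s)).
- have ltHK := proper_card pHK; have ltHG := leq_trans ltHK (subset_leq_card sKG).
  by apply: leq_trans (ltn_sub2l ltHG ltHK) _; rewrite -ltnS.
- exact: sxsG.
- by rewrite expnS; apply: leq_trans (proper_card_double pHK); rewrite leq_mul2l le_s orbT.
Qed.

Lemma aut1 G a : a \in Aut G -> a 1%g = 1%g.
Proof. by move=> AutGa; exact: (morphism.morph1 (autm_morphism AutGa)). Qed.

Lemma autM G a : a \in Aut G -> {in G &, {morph a : x y / (x * y)%g}}.
Proof. by move=> AutGa x y Gx Gy; exact: (morphM (autm_morphism AutGa) Gx Gy). Qed.

Lemma aut_agreement_group G a b : a \in Aut G -> b \in Aut G ->
  group_set [set x in G | a x == b x].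
Proof.
move=> AutGa AutGb; apply/group_setP; split.
  by rewrite inE group1 (aut1 AutGa) (aut1 AutGb) eqxx.
move=> x y; rewrite !inE => /andP [Gx /eqP abx] /andP [Gy /eqP aby].
by rewrite groupM // (autM AutGa) // (autM AutGb) // abx aby eqxx.
Qed.

Lemma aut_eq_on_gen G (A : {set gT}) a b : a \in Aut G -> b \in Aut G ->
  <<A>>%g = G -> {in A, a =1 b} -> a = b.
Proof.
move=> AutGa AutGb genA eq_ab; apply: (eq_Aut AutGa AutGb) => x.
have sAG : A \subset G by rewrite -genA subset_gen.
suff : G \subset Group (aut_agreement_group AutGa AutGb).
  by move=> /subsetP sub /sub; rewrite inE => /andP [_ /eqP].
rewrite -{1}genA gen_subG; apply/subsetP => y Ay.
by rewrite inE (subsetP sAG) //= eq_ab.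
Qed.

(* An automorphism is determined by the images of a generating sequence s,
   so there are at most |G|^(size s) of them. *)
Lemma card_Aut_gen (s : seq gT) : <<[set x in s]>>%g = [set: gT] ->
  #|Aut [set: gT]| <= #|gT| ^ size s.
Proof.
move=> gen_s; rewrite -card_tuple.
rewrite -(card_in_imset (f := fun a => map_tuple a (in_tuple s))); first exact: max_card.
move=> a b AutGa AutGb /(congr1 val) /= eq_map.
apply: (aut_eq_on_gen AutGa AutGb gen_s) => x; rewrite inE => sx.
have := congr1 (fun t => nth 1%g t (index x s)) eq_map.
by rewrite !(nth_map 1%g) ?index_mem // nth_index.
Qed.

(* A non-identity automorphism fixes a proper subgroup, so at most half of
   the points of G. *)
Lemma aut_fixed_index G a : a \in Aut G -> a != 1%g ->
  2 * #|[set x in G | a x == x]| <= #|G|.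
Proof.
move=> AutGa nt_a; have AutG1 : 1%g \in Aut G := group1 _.
pose C := Group (aut_agreement_group AutGa AutG1).
have pCG : C \proper G.
  rewrite properEneq andbC; apply/andP; split.
    by apply/subsetP => x; rewrite inE => /andP [].
  apply: contra nt_a => /eqP eqCG.
  apply/eqP/(aut_eq_on_gen AutGa AutG1 (genGid G)) => x Gx.
  by move: Gx; rewrite -eqCG inE => /andP [_ /eqP].
have -> : [set x in G | a x == x] = C by apply/setP => x; rewrite !inE perm1.
exact: proper_card_double pCG.
Qed.

End AutomorphismCounting.

Lemma INR_expn (m k : nat) : INR (m ^ k) = (INR m ^ k)%R.
Proof. by elim: k => [|k IHk]; rewrite ?expn0 // expnS -multE mult_INR IHk. Qed.

Lemma INR_leq (m n : nat) : m <= n -> (INR m <= INR n)%R.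
Proof. by move/leP; apply: le_INR. Qed.

Lemma Rpower2_log2R (x : R) : (0 < x)%R -> Rpower 2 (log2R x) = x.
Proof.
move=> x_gt0; have ln2_gt0 : (0 < ln 2)%R by rewrite -ln_1; apply: ln_increasing; lra.
rewrite /Rpower /log2R -[X in exp X]/(ln x / ln 2 * ln 2)%R.
by rewrite /Rdiv Rmult_assoc Rinv_l ?Rmult_1_r ?exp_ln //; lra.
Qed.

Lemma le_log2R (k : nat) (x : R) : (0 < x)%R -> (2 ^ k <= x)%R -> (INR k <= log2R x)%R.
Proof.
move=> x_gt0 le_x; apply: Rnot_lt_le => lt_k.
have := Rpower_lt 2 (log2R x) (INR k) ltac:(lra) lt_k.
rewrite Rpower2_log2R // Rpower_pow; lra.
Qed.

Lemma INR_pow_le_log2R (n k : nat) : 0 < n -> 2 ^ k <= n ->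
  (INR (n ^ k) <= Rpower 2 (log2R (INR n) ^ 2))%R.
Proof.
move=> n_gt0 le_k; have INRn_gt0 : (0 < INR n)%R by apply: lt_0_INR; apply/ltP.
have k_le : (INR k <= log2R (INR n))%R.
  by apply: le_log2R => //; rewrite -[2%R]/(INR 2) -INR_expn; apply: INR_leq.
rewrite INR_expn -Rpower_pow // -{1}(Rpower2_log2R INRn_gt0) Rpower_mult.
apply: Rle_Rpower; first lra.
have := pos_INR k; nra.
Qed.

Lemma INR_pow2_le (r : nat) (x : R) : (INR r <= x)%R -> (INR (2 ^ r) <= Rpower 2 x)%R.
Proof.
move=> le_r; rewrite INR_expn -Rpower_pow; last (simpl; lra).
by apply: Rle_Rpower => //; simpl; lra.
Qed.

Lemma card_bigcup_leq (I T : finType) (P : pred I) (F : I -> {set T}) :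
  #|\bigcup_(i | P i) F i| <= \sum_(i | P i) #|F i|.
Proof.
apply: (big_ind2 (fun (A : {set T}) m => #|A| <= m)) => [|A m B p le_m le_p|//].
  by rewrite cards0.
exact: leq_trans (leq_card_setU A B) (leq_add le_m le_p).
Qed.

Section FixedSubsets.
Variable gT : finGroupType.
Local Notation n := #|gT|.

Lemma card_aut_invariant_sets a : a \in Aut [set: gT] -> a != 1%g ->
  #|[set S : {set gT} | a @: S == S]| <= 2 ^ (3 * n %/ 4).
Proof.
move=> AutGa nt_a.
have fix_le : 2 * #|[set x | a x == x]| <= n.
  have -> : [set x | a x == x] = [set x in [set: gT] | a x == x].
    by apply/setP => x; rewrite !inE.
  by rewrite -cardsT; apply: aut_fixed_index.
apply: leq_trans (card_perm_invariant_sets a) _.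
by rewrite leq_pexp2l // leq_divRL // mulnC card_orbit_roots_half_fixed.
Qed.

(* The combinatorial form of the bound: by the union bound over the
   non-identity automorphisms, there are at most n^k * 2^(3n/4) subsets
   fixed by one of them, for some k with 2^k <= n. *)
Lemma card_aut_fixed_subsets :
  exists2 k, 2 ^ k <= n & #|aut_fixed_subsets gT| <= n ^ k * 2 ^ (3 * n %/ 4).
Proof.
have [s gen_s le_s] := small_generating_seq [set: gT]%G.
exists (size s); first by rewrite -cardsT.
pose nontriv := [pred a | (a \in Aut [set: gT]) && (a != 1%g)].
have sub : aut_fixed_subsets gT \subset
    \bigcup_(a | nontriv a) [set S : {set gT} | a @: S == S].
  apply/subsetP => S; rewrite inE => /existsP [a /andP [AutGa /andP [nt_a aS]]].
  by apply/bigcupP; exists a; rewrite /= ?AutGa ?nt_a // inE.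
apply: leq_trans (subset_leq_card sub) _; apply: leq_trans (card_bigcup_leq _ _) _.
apply: (@leq_trans (\sum_(a | nontriv a) 2 ^ (3 * n %/ 4))).
  by apply: leq_sum => a /andP [AutGa nt_a]; exact: card_aut_invariant_sets.
rewrite sum_nat_const leq_mul2r; apply/orP; right.
apply: leq_trans (card_Aut_gen gen_s); apply: subset_leq_card.
by apply/subsetP => a; rewrite unfold_in => /andP [].
Qed.

End FixedSubsets.

Theorem lemma5p2 (gT : finGroupType) (hn : (2 <= #|gT|)%N) :
  (INR #|aut_fixed_subsets gT|
     <= Rpower 2 (3 * INR #|gT| / 4 + (log2R (INR #|gT|)) ^ 2))%R.
Proof.
have [k le_k count_le] := card_aut_fixed_subsets gT.
apply: Rle_trans (INR_leq count_le) _.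
rewrite -multE mult_INR Rpower_plus (Rmult_comm (Rpower 2 _)).
apply: Rmult_le_compat; try exact: pos_INR.
- by apply: INR_pow_le_log2R; rewrite // (leq_trans _ hn).
- apply: INR_pow2_le; have := INR_leq (leq_trunc_div (3 * #|gT|) 4).
  by rewrite -!multE !mult_INR /=; lra.
Qed.
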